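(* Let $q$ be a prime power and let $C\subseteq\mathbb{F}_q^n$ be an $[n,\ell,d]_q$ classical linear code such that $C^{*3}:=\mathrm{span}\{c_1*c_2*c_3: c_1,c_2,c_3\in C\}$ has distance $d'$ and $C^\perp$ has distance $d^\perp$. Then for every positive integer $k<\min\{\ell,d,d',d^\perp\}$, there exists an $[[n-k,\,k,\,\geq\min\{d,d^\perp\}-k]]_q$ quantum CSS code that supports a transversal $CCZ_q$ gate.
   Context: $x*y$ denotes the componentwise product in $\mathbb{F}_q^n$, $x\cdot y=\sum_ix_iy_i$, and $V^\perp$ is the dual w.r.t. this form. An $[n,\ell,d]_q$ classical code is an $\ell$-dimensional subspace of $\mathbb{F}_q^n$ with minimum Hamming weight of nonzero codewords $d$. A quantum CSS code $\mathrm{CSS}(Q_X,Q_Z)$ of length $n$ over $\mathbb{F}_q$ is a pair of subspaces $Q_X,Q_Z\subseteq\mathbb{F}_q^n$ with $Q_X^\perp\subseteq Q_Z$, of dimension $k=\dim Q_Z-\dim Q_X^\perp$ and distance $\min\{|y|:y\in(Q_X\setminus Q_Z^\perp)\cup(Q_Z\setminus Q_X^\perp)\}$ ($|y|$ Hamming weight); it is an $[[n,k,d]]_q$ code. A $Z$ encoding function is an $\mathbb{F}_q$-linear isomorphism $\mathrm{Enc}_Z:\mathbb{F}_q^k\to Q_Z/Q_X^\perp$. A code $Q$ with $Z$ encoding function supports a transversal $CCZ_q$ gate if there is a coefficients vector $b\in\mathbb{F}_q^n$ such that for all $z^{(1)},z^{(2)},z^{(3)}\in\mathbb{F}_q^k$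 and all $z^{(h)\prime}\in\mathrm{Enc}_Z(z^{(h)})$, $\sum_{j\in[k]}z^{(1)}_jz^{(2)}_jz^{(3)}_j=\sum_{j\in[n]}b_jz^{(1)\prime}_jz^{(2)\prime}_jz^{(3)\prime}_j$. *)

From HB Require Import structures.
From mathcomp Require Import all_boot all_order all_algebra finalg.
Set Implicit Arguments. Unset Strict Implicit. Unset Printing Implicit Defensive.
Import GRing.Theory.
Local Open Scope ring_scope.

Definition cmul (F : finFieldType) (n : nat) (x y : 'rV[F]_n) : 'rV[F]_n :=
  \row_i (x 0 i * y 0 i).

Definition dot (F : finFieldType) (n : nat) (x y : 'rV[F]_n) : F :=
  \sum_(i < n) x 0 i * y 0 i.

Definition wt (F : finFieldType) (n : nat) (x : 'rV[F]_n) : nat :=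
  #|[set i : 'I_n | x 0 i != 0]|.

(* V^perp w.r.t. dot: the span of the (already linear) set of all x orthogonal to V *)
Definition dualv (F : finFieldType) (n : nat) (V : {vspace 'rV[F]_n})
  : {vspace 'rV[F]_n} :=
  <<[seq x <- enum 'rV[F]_n | [forall y : 'rV[F]_n, (y \in V) ==> (dot x y == 0%R)]]>>%VS.

Definition cube_code (F : finFieldType) (n : nat) (C : {vspace 'rV[F]_n})
  : {vspace 'rV[F]_n} :=
  let S := [seq x <- enum 'rV[F]_n | x \in C] in
  <<flatten [seq [seq cmul (cmul a b) c | b <- S, c <- S] | a <- S]>>%VS.

Definition has_distance (F : finFieldType) (n : nat) (V : {vspace 'rV[F]_n})
  (d : nat) : Prop :=
  (exists2 x, x \in V & (x != 0) /\ wt x = d) /\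
  (forall x, x \in V -> x != 0 -> (d <= wt x)%N).

Definition is_CSS (F : finFieldType) (n : nat) (QX QZ : {vspace 'rV[F]_n}) : Prop :=
  (dualv QX <= QZ)%VS.

Definition css_dim (F : finFieldType) (n : nat) (QX QZ : {vspace 'rV[F]_n}) : nat :=
  (\dim QZ - \dim (dualv QX))%N.

Definition css_dist_ge (F : finFieldType) (n : nat) (QX QZ : {vspace 'rV[F]_n})
  (m : nat) : Prop :=
  forall y : 'rV[F]_n,
    ((y \in QX) && (y \notin dualv QZ)) || ((y \in QZ) && (y \notin dualv QX)) ->
    (m <= wt y)%N.

(* A Z encoding function Enc_Z : F^k -> QZ / QX^perp (a linear isomorphism),
   represented by a linear lift f : F^k -> QZ: Enc_Z(z) is the coset
   f z + QX^perp.  The induced map to the quotient is an isomorphism iff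
   it is injective and surjective. *)
Definition is_Z_encoding (F : finFieldType) (n k : nat)
  (QX QZ : {vspace 'rV[F]_n}) (f : 'Hom('rV[F]_k, 'rV[F]_n)) : Prop :=
  [/\ forall z, f z \in QZ,
      forall z, f z \in dualv QX -> z = 0
    & forall y, y \in QZ -> exists z, y - f z \in dualv QX].

Definition supports_CCZ (F : finFieldType) (n k : nat)
  (QX QZ : {vspace 'rV[F]_n}) (f : 'Hom('rV[F]_k, 'rV[F]_n)) : Prop :=
  exists b : 'rV[F]_n,
    forall (z1 z2 z3 : 'rV[F]_k) (z1' z2' z3' : 'rV[F]_n),
      z1' - f z1 \in dualv QX -> z2' - f z2 \in dualv QX ->
      z3' - f z3 \in dualv QX ->
      \sum_(j < k) z1 0 j * z2 0 j * z3 0 j =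
      \sum_(j < n) b 0 j * z1' 0 j * z2' 0 j * z3' 0 j.

From HB Require Import structures.
From mathcomp Require Import all_boot all_order all_algebra finalg.
From mathcomp Require Import zify.
Set Implicit Arguments. Unset Strict Implicit. Unset Printing Implicit Defensive.
Import GRing.Theory.
Local Open Scope ring_scope.

(* Order the coordinates so that the first k are the ones removed.  Puncturing
   C on them gives QZ, and QX is the dual of the code obtained by shortening C
   on them.  Because k < d and k < d^perp, restriction to the last n - k
   coordinates is injective on C and restriction to the first k coordinates is
   onto F^k, so QZ / QX^perp is a copy of F^k and z is encoded by the tail of
   any codeword of C whose head is z.  Because k < d', some w in (C^{*3})^perp
   has head (-1, ..., -1); orthogonality of w to c1 * c2 * c3 then says that
   the cubic form on the heads equals the cubic form on the tails weighted by
   the tail of w, which is the transversal CCZ gate. *)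

Section DotAndWeight.
Variable F : finFieldType.

Lemma dotC n (x y : 'rV[F]_n) : dot x y = dot y x.
Proof. by apply: eq_bigr => i _; rewrite mulrC. Qed.

Lemma dotDr n (x y z : 'rV[F]_n) : dot x (y + z) = dot x y + dot x z.
Proof. by rewrite /dot -big_split; apply: eq_bigr => i _; rewrite mxE mulrDr. Qed.

Lemma dotZr n a (x y : 'rV[F]_n) : dot x (a *: y) = a * dot x y.
Proof. by rewrite /dot mulr_sumr; apply: eq_bigr => i _; rewrite mxE mulrCA. Qed.

Lemma dot0r n (x : 'rV[F]_n) : dot x 0 = 0.
Proof. by rewrite /dot big1 // => i _; rewrite mxE mulr0. Qed.

Lemma dot_sumr n I (r : seq I) (P : pred I) (x : 'rV[F]_n) (G : I -> 'rV[F]_n) :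
  dot x (\sum_(i <- r | P i) G i) = \sum_(i <- r | P i) dot x (G i).
Proof.
elim/big_rec2: _ => [|i y1 y2 _ <-]; first by rewrite dot0r.
by rewrite dotDr.
Qed.

Lemma dot_row_mx k m (a c : 'rV[F]_k) (b e : 'rV[F]_m) :
  dot (row_mx a b) (row_mx c e) = dot a c + dot b e.
Proof.
by rewrite /dot big_split_ord /=; congr (_ + _); apply: eq_bigr => i _;
  rewrite ?row_mxEl ?row_mxEr.
Qed.

Lemma dot_cmul3 k m (w a b c : 'rV[F]_(k + m)) :
  dot w (cmul (cmul a b) c) =
  \sum_(j < k) lsubmx w 0 j * lsubmx a 0 j * lsubmx b 0 j * lsubmx c 0 j +
  \sum_(j < m) rsubmx w 0 j * rsubmx a 0 j * rsubmx b 0 j * rsubmx c 0 j.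
Proof.
by rewrite /dot big_split_ord /=; congr (_ + _); apply: eq_bigr => j _;
  rewrite !mxE !mulrA.
Qed.

Lemma wt0 n : wt (0 : 'rV[F]_n) = 0%N.
Proof.
by apply/eqP; rewrite cards_eq0; apply/eqP/setP => i; rewrite !inE mxE eqxx.
Qed.

Lemma wt_le n (x : 'rV[F]_n) : (wt x <= n)%N.
Proof. by rewrite /wt -[X in (_ <= X)%N]card_ord max_card. Qed.

Lemma wt_row_mx k m (a : 'rV[F]_k) (b : 'rV[F]_m) :
  wt (row_mx a b) = (wt a + wt b)%N.
Proof.
rewrite /wt -!sum1dep_card big_split_ord /=.
by congr (_ + _)%N; apply: eq_bigl => i; rewrite ?row_mxEl ?row_mxEr.
Qed.

Lemma wt_lsubmx_rsubmx k m (x : 'rV[F]_(k + m)) :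
  wt x = (wt (lsubmx x) + wt (rsubmx x))%N.
Proof. by rewrite -{1}[x]hsubmxK wt_row_mx. Qed.

Lemma has_distance_wt_lt n (V : {vspace 'rV[F]_n}) d x :
  has_distance V d -> x \in V -> (wt x < d)%N -> x = 0.
Proof.
move=> [_ dV] xV; apply: contraTeq => x_neq0.
by rewrite -leqNgt dV.
Qed.

Lemma mem_cube_code n (C : {vspace 'rV[F]_n}) a b c :
  a \in C -> b \in C -> c \in C -> cmul (cmul a b) c \in cube_code C.
Proof.
move=> aC bC cC; apply: memv_span; apply/flattenP.
have inS x : x \in C -> x \in [seq x <- enum 'rV[F]_n | x \in C].
  by move=> xC; rewrite mem_filter xC mem_enum.
by exists [seq cmul (cmul a b') c' | b' <- [seq x <- enum 'rV[F]_n | x \in C],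
  c' <- [seq x <- enum 'rV[F]_n | x \in C]];
  [apply: map_f; apply: inS | apply: allpairs_f; apply: inS].
Qed.

End DotAndWeight.

Section DualCode.
Variables (F : finFieldType) (n : nat).
Implicit Types V W : {vspace 'rV[F]_n}.

Lemma memv_dualP V x :
  reflect (forall y, y \in V -> dot x y = 0) (x \in dualv V).
Proof.
apply: (iffP idP) => [|xV]; last first.
  apply: memv_span; rewrite mem_filter mem_enum andbT.
  by apply/forallP => y; apply/implyP => /xV ->.
rewrite /dualv; set S := [seq _ <- _ | _] => xS y yV.
rewrite (coord_span (X := in_tuple S) xS) dotC dot_sumr big1 // => i _.
have : S`_i \in S := mem_nth 0 (ltn_ord i).
rewrite mem_filter => /andP[/forallP/(_ y)/implyP/(_ yV)/eqP Si_y _].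
by rewrite dotZr dotC Si_y mulr0.
Qed.

Lemma dimv_rV : \dim (fullv : {vspace 'rV[F]_n}) = n.
Proof. by rewrite dimvf dim_matrix mul1r. Qed.

(* The dual is the kernel of x |-> (x . v_i)_i for a basis (v_i) of V; that map
   is onto because the basis vectors are linearly independent. *)
Lemma dim_dualv V : (\dim (dualv V) + \dim V)%N = n.
Proof.
set m := \dim V; set vs := vbasis V.
pose B : 'M[F]_(m, n) := \matrix_(i < m) vs`_i.
pose g : 'Hom('rV[F]_n, 'rV[F]_m) := linfun (mulmxr B^T).
have gE x i : g x 0 i = dot x vs`_i.
  by rewrite lfunE /= !mxE; apply: eq_bigr => j _; rewrite !mxE.
have vsV (i : 'I_m) : vs`_i \in V.
  by apply: vbasis_mem; apply: mem_nth; rewrite size_tuple.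
have dual_ker : dualv V = lker g.
  apply/vspaceP => x; rewrite memv_ker; apply/memv_dualP/eqP => [xV | gx0].
    by apply/rowP => i; rewrite gE xV ?vsV // mxE.
  move=> y yV; rewrite (coord_vbasis yV) dot_sumr big1 // => i _.
  by rewrite dotZr -gE gx0 mxE mulr0.
have B_free : row_free B.
  apply: inj_row_free => v; rewrite mulmx_sum_row => vB0; apply/rowP => i.
  move/freeP: (basis_free (vbasisP V)) => /(_ (fun i => v 0 i)) v_eq0.
  rewrite mxE; apply: v_eq0.
  by rewrite -[RHS]vB0; apply: eq_bigr => j _; rewrite rowK.
have g_onto : (g @: fullv)%VS = fullv.
  apply/vspaceP => y; rewrite memvf.
  have : (y <= B^T)%MS by apply: submx_full; rewrite /row_full mxrank_tr.
  case/submxP => D ->; rewrite -[D *m B^T]/(mulmxr B^T D) -lfunE.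
  exact: memv_img (memvf D).
have := limg_ker_dim g fullv.
by rewrite capfv g_onto -dual_ker !dimv_rV dimvf dim_matrix mul1r.
Qed.

Lemma dualvS V W : (V <= W)%VS -> (dualv W <= dualv V)%VS.
Proof.
move/subvP=> VW; apply/subvP => x /memv_dualP xW; apply/memv_dualP => y yV.
exact/xW/VW.
Qed.

Lemma dualvK V : dualv (dualv V) = V.
Proof.
have sV : (V <= dualv (dualv V))%VS.
  apply/subvP => x xV; apply/memv_dualP => y /memv_dualP yV.
  by rewrite dotC yV.
apply/eqP; rewrite eq_sym eqEdim sV /=.
have := dim_dualv V; have := dim_dualv (dualv V); lia.
Qed.

End DualCode.

Section PunctureShorten.
Variables (F : finFieldType) (k m : nat).
Implicit Types V W : {vspace 'rV[F]_(k + m)}.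

Definition lproj : 'Hom('rV[F]_(k + m), 'rV[F]_k) := linfun (@lsubmx F 1 k m).
Definition rproj : 'Hom('rV[F]_(k + m), 'rV[F]_m) := linfun (@rsubmx F 1 k m).

Lemma lprojE x : lproj x = lsubmx x. Proof. by rewrite lfunE. Qed.
Lemma rprojE x : rproj x = rsubmx x. Proof. by rewrite lfunE. Qed.

Definition punctured V : {vspace 'rV[F]_m} := (rproj @: V)%VS.
Definition shortened V : {vspace 'rV[F]_m} := (rproj @: (V :&: lker lproj))%VS.

Lemma mem_puncturedP V y :
  reflect (exists2 c, c \in V & y = rsubmx c) (y \in punctured V).
Proof.
by apply: (iffP memv_imgP) => -[c cV ->]; exists c; rewrite ?rprojE.
Qed.

Lemma mem_shortenedP V y :
  reflect (exists2 s, (s \in V) && (lsubmx s == 0) & y = rsubmx s)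
          (y \in shortened V).
Proof.
apply: (iffP memv_imgP) => -[s].
  by rewrite memv_cap memv_ker lprojE rprojE => sV ->; exists s.
move=> sV ->; exists s; rewrite ?rprojE // memv_cap memv_ker lprojE.
by case/andP: sV => -> ->.
Qed.

Lemma shortened_sub_punctured V : (shortened V <= punctured V)%VS.
Proof. exact/limgS/capvSl. Qed.

(* A vector supported on the last m coordinates lies in V = (V^perp)^perp. *)
Lemma dual_punctured_dual_sub V :
  (dualv (punctured (dualv V)) <= shortened V)%VS.
Proof.
apply/subvP => x /memv_dualP x_perp; apply/mem_shortenedP.
exists (row_mx 0 x); last by rewrite row_mxKr.
rewrite row_mxKl eqxx andbT -[V]dualvK; apply/memv_dualP => u uV.
rewrite -[u]hsubmxK dot_row_mx dotC dot0r add0r x_perp //.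
by apply/mem_puncturedP; exists u.
Qed.

Lemma has_distance_rsubmx_eq0 V d :
  has_distance V d -> (k < d)%N -> forall x, x \in V -> rsubmx x = 0 -> x = 0.
Proof.
move=> dV kd x xV x_r0; apply: (has_distance_wt_lt dV xV).
by rewrite wt_lsubmx_rsubmx x_r0 wt0 addn0; apply: leq_ltn_trans (wt_le _) kd.
Qed.

Lemma has_distance_row_mx0 V d :
  has_distance V d -> (k < d)%N ->
  forall u : 'rV[F]_k, row_mx u 0 \in V -> u = 0.
Proof.
move=> dV kd u uV; have := has_distance_wt_lt dV uV.
rewrite wt_row_mx wt0 addn0 => /(_ (leq_ltn_trans (wt_le u) kd)) u0.
by rewrite -(row_mxKl u (0 : 'rV[F]_m)) u0 linear0.
Qed.

Lemma has_distance_wt_rsubmx V d c :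
  has_distance V d -> c \in V -> c != 0 -> (d - k <= wt (rsubmx c))%N.
Proof.
move=> [_ dV] cV c_neq0; rewrite leq_subLR.
by apply: leq_trans (dV c cV c_neq0) _; rewrite wt_lsubmx_rsubmx leq_add2r wt_le.
Qed.

Lemma limg_lproj_full W :
  (forall u : 'rV[F]_k, row_mx u 0 \in dualv W -> u = 0) ->
  (lproj @: W)%VS = fullv.
Proof.
move=> dualW_inj; set I := (lproj @: W)%VS.
have I_perp0 : dualv I = 0%VS.
  apply/eqP; rewrite -subv0; apply/subvP => u /memv_dualP u_perp.
  rewrite memv0; apply/eqP/dualW_inj/memv_dualP => w wW.
  rewrite -[w]hsubmxK dot_row_mx (dotC 0) dot0r addr0.
  by apply: u_perp; rewrite -lprojE; apply: memv_img.
apply/eqP; rewrite eqEdim subvf dimv_rV /=.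
by have := dim_dualv I; rewrite I_perp0 dimv0 add0n => ->.
Qed.

Lemma exists_lift V : (lproj @: V)%VS = fullv ->
  exists L : 'M[F]_(k, k + m),
    forall z : 'rV[F]_k, z *m L \in V /\ lsubmx (z *m L) = z.
Proof.
move=> lproj_onto.
have lift_delta (j : 'I_k) :
    exists c, (c \in V) && (lsubmx c == delta_mx 0 j).
  have : delta_mx 0 j \in (lproj @: V)%VS by rewrite lproj_onto memvf.
  by case/memv_imgP => c cV ->; exists c; rewrite cV lprojE eqxx.
exists (\matrix_(j < k) xchoose (lift_delta j)) => z.
rewrite mulmx_sum_row; split.
  apply: memv_suml => j _; apply: memvZ; rewrite rowK.
  by case/andP: (xchooseP (lift_delta j)).
rewrite linear_sum /= [RHS]row_sum_delta; apply: eq_bigr => j _.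
by rewrite linearZ /= rowK; case/andP: (xchooseP (lift_delta j)) => _ /eqP ->.
Qed.

Lemma dim_punctured V :
  (forall x, x \in V -> rsubmx x = 0 -> x = 0) -> \dim (punctured V) = \dim V.
Proof.
move=> rsub_inj; apply: limg_dim_eq; apply/eqP; rewrite -subv0.
apply/subvP => x; rewrite memv_cap memv_ker memv0 rprojE => /andP[xV /eqP x_r0].
by rewrite (rsub_inj x xV x_r0).
Qed.

Lemma dim_shortened V :
  (forall x, x \in V -> rsubmx x = 0 -> x = 0) ->
  (lproj @: V)%VS = fullv -> (\dim (shortened V) + k)%N = \dim V.
Proof.
move=> rsub_inj lproj_onto.
rewrite -(limg_ker_dim lproj V) lproj_onto dimv_rV; congr (_ + _)%N.
rewrite /shortened (@dim_punctured (V :&: lker lproj)) // => x.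
by rewrite memv_cap => /andP[xV _]; apply: rsub_inj.
Qed.

Definition lift_encoding (L : 'M[F]_(k, k + m)) : 'Hom('rV[F]_k, 'rV[F]_m) :=
  (rproj \o linfun (mulmxr L))%VF.

Lemma lift_encodingE L z : lift_encoding L z = rsubmx (z *m L).
Proof. by rewrite comp_lfunE rprojE lfunE. Qed.

End PunctureShorten.

Arguments lproj {F k m}.

Section CCZCode.
Variables (F : finFieldType) (k m : nat) (C : {vspace 'rV[F]_(k + m)}).
Variables (d dperp : nat).
Hypotheses (dC : has_distance C d) (dCperp : has_distance (dualv C) dperp).

Lemma css_dist_shortened_punctured :
  css_dist_ge (dualv (shortened C)) (punctured C) (minn d dperp - k).
Proof.
move=> y /orP[/andP[yQX y_notin] | /andP[/mem_puncturedP[c cC ->] c_notin]].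
  have := dualvS (dual_punctured_dual_sub C); rewrite dualvK.
  move=> /subvP/(_ y yQX)/mem_puncturedP[u uC y_def].
  have u_neq0 : u != 0.
    by apply: contraNneq y_notin => u0; rewrite y_def u0 linear0 mem0v.
  have := has_distance_wt_rsubmx dCperp uC u_neq0; rewrite -y_def; lia.
have c_neq0 : c != 0.
  by apply: contraNneq c_notin => c0; rewrite dualvK c0 linear0 mem0v.
have := has_distance_wt_rsubmx dC cC c_neq0; lia.
Qed.

Hypotheses (k_lt_d : (k < d)%N) (k_lt_dperp : (k < dperp)%N).

Let rsubmx_inj := has_distance_rsubmx_eq0 dC k_lt_d.

Let lproj_onto : (lproj @: C)%VS = fullv.
Proof. exact: limg_lproj_full (has_distance_row_mx0 dCperp k_lt_dperp). Qed.

Lemma css_dim_shortened_punctured :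
  css_dim (dualv (shortened C)) (punctured C) = k.
Proof.
rewrite /css_dim dualvK (dim_punctured rsubmx_inj).
have := dim_shortened rsubmx_inj lproj_onto; lia.
Qed.

Variable d' : nat.
Hypotheses (dC3 : has_distance (cube_code C) d') (k_lt_d' : (k < d')%N).

Variable L : 'M[F]_(k, k + m).
Hypothesis liftL : forall z : 'rV[F]_k, z *m L \in C /\ lsubmx (z *m L) = z.

Lemma mem_coset_lift z y :
  y - lift_encoding L z \in shortened C ->
  exists2 c, c \in C & lsubmx c = z /\ rsubmx c = y.
Proof.
have [zLC zL_l] := liftL z.
case/mem_shortenedP => s /andP[sC /eqP s_l0] y_def.
exists (z *m L + s); first exact: memvD.
rewrite !linearD /= zL_l s_l0 addr0 -y_def lift_encodingE.
by rewrite addrC subrK.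
Qed.

Lemma lift_encoding_is_Z_encoding :
  is_Z_encoding (dualv (shortened C)) (punctured C) (lift_encoding L).
Proof.
rewrite /is_Z_encoding dualvK; split.
- move=> z; apply/mem_puncturedP; exists (z *m L); last exact: lift_encodingE.
  by case: (liftL z).
- move=> z; rewrite lift_encodingE.
  case/mem_shortenedP => s /andP[sC /eqP s_l0] s_r.
  have [zLC zL_l] := liftL z.
  have /eqP : z *m L - s = 0.
    by apply: rsubmx_inj; rewrite ?memvB // linearB /= s_r subrr.
  by rewrite subr_eq0 => /eqP zLs; rewrite -zL_l zLs.
- move=> _ /mem_puncturedP[c cC ->]; exists (lsubmx c).
  apply/mem_shortenedP; exists (c - lsubmx c *m L).
    have [zLC zL_l] := liftL (lsubmx c).
    by rewrite memvB // linearB /= zL_l subrr eqxx.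
  by rewrite linearB lift_encodingE.
Qed.

(* The weights b are the tail of a w in (C^{*3})^perp whose head is all -1. *)
Lemma lift_encoding_supports_CCZ :
  supports_CCZ (dualv (shortened C)) (punctured C) (lift_encoding L).
Proof.
have : const_mx (-1) \in (lproj @: dualv (cube_code C))%VS.
  by rewrite limg_lproj_full ?memvf // dualvK; apply: has_distance_row_mx0 dC3 _.
case/memv_imgP => w /memv_dualP w_perp; rewrite lprojE => w_l.
exists (rsubmx w) => z1 z2 z3 y1 y2 y3; rewrite dualvK.
case/mem_coset_lift => c1 c1C [<- <-]; case/mem_coset_lift => c2 c2C [<- <-].
case/mem_coset_lift => c3 c3C [<- <-].
move: (w_perp _ (mem_cube_code c1C c2C c3C)) => /eqP.
rewrite dot_cmul3 -w_l addrC addr_eq0 => /eqP ->.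
rewrite -sumrN; apply: eq_bigr => j _.
by rewrite [const_mx _ _ _]mxE mulN1r !mulNr opprK.
Qed.

End CCZCode.

Theorem theorem3p1 (F : finFieldType) (n l d d' dperp : nat)
  (C : {vspace 'rV[F]_n}) :
  \dim C = l ->
  has_distance C d ->
  has_distance (cube_code C) d' ->
  has_distance (dualv C) dperp ->
  forall k : nat, (0 < k)%N ->
    (k < minn (minn l d) (minn d' dperp))%N ->
    exists (QX QZ : {vspace 'rV[F]_(n - k)}),
      [/\ is_CSS QX QZ, css_dim QX QZ = k,
          css_dist_ge QX QZ (minn d dperp - k)
        & exists f : 'Hom('rV[F]_k, 'rV[F]_(n - k)),
            is_Z_encoding QX QZ f /\ supports_CCZ QX QZ f].
Proof.
move=> _ dC dC3 dCperp k _ k_lt.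
have [k_lt_d k_lt_d' k_lt_dperp] : [/\ k < d, k < d' & k < dperp]%N.
  by split; lia.
have k_le_n : (k <= n)%N.
  case: dC => -[x _ [_ wx]] _.
  by apply: leq_trans (ltnW k_lt_d) _; rewrite -wx wt_le.
move: (n - k)%N (subnKC k_le_n) => m n_def; subst n.
have [L liftL] :=
  exists_lift (limg_lproj_full (has_distance_row_mx0 dCperp k_lt_dperp)).
exists (dualv (shortened C)), (punctured C); split.
- by rewrite /is_CSS dualvK shortened_sub_punctured.
- exact: css_dim_shortened_punctured dC dCperp k_lt_d k_lt_dperp.
- exact: css_dist_shortened_punctured dC dCperp.
exists (lift_encoding L); split.
  exact: (lift_encoding_is_Z_encoding dC k_lt_d liftL).
exact: (lift_encoding_supports_CCZ dC3 k_lt_d' liftL).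
Qed.
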